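(* Let $\epsilon>0$. Then, unconditionally, for every complex $s$ with $\Re(s)>1$, $$\int_0^1 f_\epsilon(u)\,u^{s-1}\,du = \frac{1}{\zeta(1+\epsilon)}\,\frac{1}{s-1} - \frac{1}{\zeta(s+\epsilon)}\,\frac{\zeta(s)}{s}.$$
   Context: $\mu$ is the Möbius function and $\zeta$ the Riemann zeta function. For real $x$, $\{x\}=x-[x]$ denotes the fractional part. For $\epsilon>0$, $f_\epsilon$ is the function on $(0,\infty)$ defined pointwise by $f_\epsilon(t)=\sum_{n=1}^\infty \frac{\mu(n)}{n^\epsilon}\left\{\frac1{nt}\right\}$ (absolutely convergent since $\{1/nt\}\le 1/nt$); it satisfies $|f_\epsilon(t)|\le \zeta(1+\epsilon)/t$. *)

From Stdlib Require Import Reals.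
From Coquelicot Require Import Coquelicot.
From mathcomp Require Import ssreflect ssrbool eqtype ssrnat seq prime.

Open Scope R_scope.

(* Moebius function mu(n) for n >= 1 (value 0 at n = 0, never used):
   mu(n) = (-1)^k if n is a product of k distinct primes, 0 otherwise. *)
Definition mobius (n : nat) : R :=
  if n == 0%nat then 0
  else if all (fun p => logn p n == 1%nat) (primes n)
       then (-1) ^ (size (primes n))
       else 0.

(* Complex power x^z := exp(z log x) for real x > 0 and complex z. *)
Definition cpowR (x : R) (z : C) : C :=
  (exp (Re z * ln x) * cos (Im z * ln x), exp (Re z * ln x) * sin (Im z * ln x)).

(* Riemann zeta function on Re s > 1, as the Dirichlet series sum_{n>=1} n^{-s}
   (real and imaginary parts summed separately). *)
Definition zeta (s : C) : C :=
  (Series (fun k => Re (cpowR (INR (S k)) (Copp s))),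
   Series (fun k => Im (cpowR (INR (S k)) (Copp s)))).

Definition f_eps (eps t : R) : R :=
  Series (fun k => mobius (S k) / Rpower (INR (S k)) eps * frac_part (/ (INR (S k) * t))).

(** For [u > 0] and [N + 1 >= 1/u], counting lattice points under the hyperbola
    [m n u <= 1] turns the fractional parts into a finite sum:
      [f_eps(u) = c/u - sum_(m n <= 1/u) mu(m) m^-eps],  [c = sum_n mu(n) n^(-1-eps)].
    Integrating against [u^(s-1)] over [[a, 1]] therefore gives
      [c (1 - a^(s-1)) / (s-1) - (1/s) sum_(m n <= 1/a) mu(m) m^-eps ((m n)^-s - a^s)],
    and Rankin's trick shows that this double sum differs from the partial products
    [(sum_(m <= N) mu(m) m^-(s+eps)) (sum_(n <= N) n^-s)] by [O(a^(Re s - t))] for any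
    [1 < t < Re s].  Letting [N -> oo] and then [a -> 0] gives the formula, once
    [sum_n mu(n) n^-z = 1/zeta(z)]; that identity comes from the same hyperbola estimate
    with [a = 1/(N+1)], the terms with [m n <= N + 1] summing to [1] by Moebius inversion. *)

Set Warnings "-notation-overridden -ambiguous-paths -hiding-delimiting-key -redundant-canonical-projection".
From Stdlib Require Import Reals Lra Lia ZArith.
From Coquelicot Require Import Coquelicot.
From HB Require Import structures.
From mathcomp Require Import ssreflect ssrbool ssrfun eqtype ssrnat seq div bigop prime.
From mathcomp Require Import zify.

Open Scope R_scope.

HB.instance Definition _ := Monoid.isComLaw.Build R 0 Rplus
  (fun a b c => esym (Rplus_assoc a b c)) Rplus_comm Rplus_0_l.

Lemma mobius_abs_le1 n : Rabs (mobius n) <= 1.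
Proof.
rewrite /mobius; case: ifP => _; first by rewrite Rabs_R0; lra.
by case: ifP => _; [rewrite pow_1_abs | rewrite Rabs_R0]; lra.
Qed.

Lemma mobius_mul_prime p e : prime p -> (0 < e)%N -> ~~ (p %| e) ->
  mobius (p * e) = - mobius e.
Proof.
move=> pp e_gt0 p_ndvd_e.
have p_gt0 := prime_gt0 pp.
have pe_neq0 : (p * e != 0)%N by rewrite muln_eq0 negb_or -!lt0n p_gt0.
have p_nprimes : p \notin primes e by rewrite mem_primes pp e_gt0.
have primes_pe : perm_eq (primes (p * e)) (p :: primes e).
  apply: uniq_perm; first exact: primes_uniq.
    by rewrite /= p_nprimes primes_uniq.
  by move=> q; rewrite primesM // primes_prime // mem_seq1 in_cons.
have logn_pe q : q \in primes e -> logn q (p * e) = logn q e.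
  move=> qe; rewrite lognM // logn_prime //.
  by case: eqP qe p_nprimes => [-> ->|].
have e_neq0 : (e == 0%N) = false by rewrite eqn0Ngt e_gt0.
rewrite /mobius (negbTE pe_neq0) e_neq0 (perm_size primes_pe).
rewrite (perm_all _ primes_pe) /= lognM // logn_prime // eqxx.
rewrite logn_coprime ?prime_coprime // (eq_in_all (a2 := fun q => logn q e == 1%N)); last first.
  by move=> q /logn_pe ->.
by rewrite addn0 /=; case: ifP => _; lra.
Qed.

Lemma mobius_sqr_dvd p d : prime p -> (0 < d)%N -> p * p %| d -> mobius d = 0.
Proof.
move=> pp d_gt0 ppd.
have p_primes : p \in primes d.
  by rewrite mem_primes pp d_gt0 (dvdn_trans (dvdn_mulr p (dvdnn p)) ppd).
have logn_ge2 : (2 <= logn p d)%N by rewrite -pfactor_dvdn // expnS expn1.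
rewrite /mobius eqn0Ngt d_gt0 /=.
by case: ifP => // /allP /(_ p p_primes) /eqP logn1; rewrite logn1 in logn_ge2.
Qed.

Lemma sum_mobius_divisors n : (0 < n)%N ->
  \big[Rplus/0]_(d <- divisors n) mobius d = if n == 1%N then 1 else 0.
Proof.
move=> n_gt0; case: (eqVneq n 1%N) => [-> | n_neq1].
  by rewrite /divisors /= big_cons big_nil /mobius /=; lra.
set p := pdiv n.
have pp : prime p by rewrite pdiv_prime // ltn_neqAle eq_sym n_neq1.
have p_dvd_n : p %| n by apply: pdiv_dvd.
have p_gt0 := prime_gt0 pp.
have dvd_n d : d \in divisors n = (d %| n) by rewrite -dvdn_divisors.
(* the divisors divisible by [p] are the [p * e] with [e] a divisor prime to [p],
   up to the non-squarefree ones, where [mobius] vanishes *)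
have sum_p_dvd : \big[Rplus/0]_(d <- divisors n | p %| d) mobius d
    = \big[Rplus/0]_(e <- divisors n | ~~ (p %| e)) mobius (p * e).
  rewrite (bigID (fun d => p * p %| d)) /= big1_seq ?Rplus_0_l; last first.
    move=> d /andP [/andP [_ ppd]]; rewrite dvd_n => /(dvdn_gt0 n_gt0) d_gt0.
    exact: mobius_sqr_dvd ppd.
  rewrite -big_filter -[RHS]big_filter -(big_map (muln p) xpredT).
  apply/perm_big/uniq_perm.
  - by rewrite filter_uniq // divisors_uniq.
  - rewrite map_inj_uniq ?filter_uniq ?divisors_uniq //.
    by move=> x y /eqP; rewrite eqn_pmul2l // => /eqP.
  move=> d; rewrite mem_filter; apply/idP/idP.
  - case/andP=> [/andP [pd nppd]]; rewrite dvd_n => dn.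
    apply/mapP; exists (d %/ p); last by rewrite mulnC divnK.
    rewrite mem_filter dvd_n; apply/andP; split.
      by apply: contra nppd; rewrite -{2}(divnK pd) mulnC dvdn_pmul2l.
    by apply: dvdn_trans dn; rewrite -{2}(divnK pd) dvdn_mulr.
  - case/mapP=> e; rewrite mem_filter dvd_n => /andP [npe en] ->.
    rewrite dvdn_mulr // dvdn_pmul2l // npe dvd_n.
    by rewrite Gauss_dvd ?p_dvd_n ?en // prime_coprime.
rewrite (bigID (fun d => p %| d)) /= sum_p_dvd -big_split /= big1_seq //.
move=> e /andP [npe]; rewrite dvd_n => /(dvdn_gt0 n_gt0) e_gt0.
by rewrite mobius_mul_prime //; lra.
Qed.

Lemma sum_n_big (f : nat -> R) N : sum_n f N = \big[Rplus/0]_(i <- iota 0 N.+1) f i.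
Proof.
elim: N => [|N IH]; first by rewrite sum_O big_cons big_nil Rplus_0_r.
by rewrite -[N.+2]addn1 iotaD big_cat big_seq1 -IH sum_Sn add0n.
Qed.

Lemma sum_n_mobius_dvd k N : (0 < k)%N -> (k <= N.+1)%N ->
  sum_n (fun i => if i.+1 %| k then mobius i.+1 else 0) N = if k == 1%N then 1 else 0.
Proof.
move=> k_gt0 k_le.
rewrite sum_n_big -(big_map S xpredT (fun d => if d %| k then mobius d else 0)).
have -> : map S (iota 0 N.+1) = iota 1 N.+1.
  by rewrite -(addn0 1%N) iotaDl; apply: eq_map => x; rewrite add1n.
rewrite -[RHS]sum_mobius_divisors // -big_mkcond -big_filter.
apply/perm_big/uniq_perm; rewrite ?filter_uniq ?iota_uniq ?divisors_uniq //.
move=> d; rewrite mem_filter mem_iota -dvdn_divisors //.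
apply/andP/idP => [[] // | dk]; split=> //.
by have := dvdn_gt0 k_gt0 dk; have := dvdn_leq k_gt0 dk; lia.
Qed.

Lemma sum_n_zero {G : AbelianMonoid} N : sum_n (fun _ => @zero G) N = zero.
Proof. exact: sum_n_m_const_zero. Qed.

Lemma sum_n_kronecker {G : AbelianMonoid} (v : G) m N : (m <= N)%N ->
  sum_n (fun j => if j == m then v else zero) N = v.
Proof.
elim: N => [|N IH] m_le.
  by rewrite sum_O; move: m_le; rewrite leqn0 => /eqP ->.
rewrite sum_Sn; case: (eqVneq m N.+1) => [-> | m_neq].
  rewrite (sum_n_ext_loc _ (fun _ => zero)) ?sum_n_zero ?plus_zero_l //.
  by move=> j /leP j_le; rewrite ltn_eqF.
rewrite IH; last by rewrite -ltnS ltn_neqAle m_neq m_le.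
exact: plus_zero_r.
Qed.

Lemma sum_n_indicator_le {G : AbelianMonoid} (g : nat -> G) m N : (0 < m)%N ->
  (if (m <= N.+1)%N then g m else zero)
  = sum_n (fun k => if k.+1 == m then g k.+1 else zero) N.
Proof.
case: m => // m _; rewrite ltnS; case: ifP => m_le.
  by rewrite (sum_n_ext _ (fun k => if k == m then g m.+1 else zero)) ?sum_n_kronecker //
     => k; rewrite eqSS; case: eqP => [->|].
rewrite (sum_n_ext_loc _ (fun _ => zero)) ?sum_n_zero //.
by move=> k /leP k_le; rewrite eqSS; case: eqP => // eq_km; rewrite -eq_km k_le in m_le.
Qed.

Lemma sum_n_mul_eq_dvd (i k N : nat) (r : R) : (k <= N)%N ->
  sum_n (fun j => if (i.+1 * j.+1 == k.+1)%N then r else 0) N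
  = if i.+1 %| k.+1 then r else 0.
Proof.
move=> k_le; case: ifP => [/dvdnP [[|m] km] | ndvd]; first by [].
  rewrite (sum_n_ext _ (fun j => if j == m then r else zero)) ?sum_n_kronecker //; last first.
    by move=> j; rewrite km [(_ * i.+1)%N]mulnC eqn_mul2l /= eqSS.
  by move: km; nia.
rewrite (sum_n_ext _ (fun _ => zero)) ?sum_n_zero // => j.
by case: eqP => // ij; rewrite -ij dvdn_mulr in ndvd.
Qed.

Lemma RtoC_sum_n (r : nat -> R) N : RtoC (sum_n r N) = sum_n (fun k => RtoC (r k)) N.
Proof.
elim: N => [|N IH]; first by rewrite !sum_O.
by rewrite !sum_Sn -IH /plus /= RtoC_plus.
Qed.

Lemma Cmult_sum_n_l (u : nat -> C) z N :
  Cmult z (sum_n u N) = sum_n (fun k => Cmult z (u k)) N.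
Proof. exact: esym (sum_n_mult_l (K := C_Ring) _ _ _). Qed.

Lemma Cmult_sum_n_r (u : nat -> C) z N :
  Cmult (sum_n u N) z = sum_n (fun k => Cmult (u k) z) N.
Proof. exact: esym (sum_n_mult_r (K := C_Ring) _ _ _). Qed.

Lemma sum_n_Cminus (u v : nat -> C) N :
  Cminus (sum_n u N) (sum_n v N) = sum_n (fun k => Cminus (u k) (v k)) N.
Proof.
elim: N => [|N IH]; first by rewrite !sum_O.
by rewrite !sum_Sn -IH -![plus _ _]/(Cplus _ _); field.
Qed.

Lemma Cmod_sum_n (u : nat -> C) N : Cmod (sum_n u N) <= sum_n (fun k => Cmod (u k)) N.
Proof. exact: (norm_sum_n_m (V := C_NormedModule) u 0 N). Qed.

Lemma sum_n_fst (u : nat -> C) N : fst (sum_n u N) = sum_n (fun k => fst (u k)) N.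
Proof. by elim: N => [|N IH]; rewrite ?sum_O // !sum_Sn -IH. Qed.

Lemma sum_n_snd (u : nat -> C) N : snd (sum_n u N) = sum_n (fun k => snd (u k)) N.
Proof. by elim: N => [|N IH]; rewrite ?sum_O // !sum_Sn -IH. Qed.

Lemma Rmult_sum_n_l (u : nat -> R) c N : c * sum_n u N = sum_n (fun k => c * u k) N.
Proof. exact: esym (sum_n_mult_l (K := R_Ring) _ _ _). Qed.

Lemma Rmult_sum_n_r (u : nat -> R) c N : sum_n u N * c = sum_n (fun k => u k * c) N.
Proof. exact: esym (sum_n_mult_r (K := R_Ring) _ _ _). Qed.

Lemma sum_n_sqr (u : nat -> R) N :
  sum_n (fun i => sum_n (fun j => u i * u j) N) N = sum_n u N ^ 2.
Proof.
rewrite /= Rmult_1_r Rmult_sum_n_r; apply: sum_n_ext => i.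
by rewrite Rmult_sum_n_l.
Qed.

(* [mu * 1] is the unit of Dirichlet convolution *)
Lemma sum_mobius_hyperbola (F : nat -> C) N :
  sum_n (fun i => sum_n (fun j => if (i.+1 * j.+1 <= N.+1)%N
      then Cmult (RtoC (mobius i.+1)) (F (i.+1 * j.+1)%N) else zero) N) N = F 1%N.
Proof.
have mobius_count k : (k <= N)%N ->
    sum_n (fun i => sum_n (fun j =>
      if (i.+1 * j.+1 == k.+1)%N then mobius i.+1 else 0) N) N = if k == 0%N then 1 else 0.
  move=> k_le; rewrite (sum_n_ext _ (fun i => if i.+1 %| k.+1 then mobius i.+1 else 0)).
    by rewrite sum_n_mobius_dvd.
  by move=> i; rewrite sum_n_mul_eq_dvd.
transitivity (sum_n (fun k => sum_n (fun i => sum_n (fun j =>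
    if (k.+1 == i.+1 * j.+1)%N then Cmult (RtoC (mobius i.+1)) (F k.+1) else zero) N) N) N).
  symmetry; rewrite sum_n_switch; apply: sum_n_ext => i.
  rewrite sum_n_switch; apply: sum_n_ext => j.
  by rewrite (sum_n_indicator_le (fun m => Cmult (RtoC (mobius i.+1)) (F m))).
rewrite (sum_n_ext_loc _ (fun k => if k == 0%N then F 1%N else zero)) ?sum_n_kronecker //.
move=> k /leP k_le.
transitivity (Cmult (RtoC (if k == 0%N then 1 else 0)) (F k.+1)); last first.
  by case: eqP => [->|_]; rewrite ?Cmult_1_l ?Cmult_0_l.
rewrite -mobius_count // RtoC_sum_n Cmult_sum_n_r; apply: sum_n_ext => i.
rewrite RtoC_sum_n Cmult_sum_n_r; apply: sum_n_ext => j.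
by rewrite eq_sym; case: eqP => _; rewrite ?Cmult_0_l.
Qed.

Lemma cpowR_add x z w : cpowR x (Cplus z w) = Cmult (cpowR x z) (cpowR x w).
Proof.
case: z w => [a b] [c d]; rewrite /cpowR /Cmult /Cplus /Re /Im /=.
rewrite !Rmult_plus_distr_r exp_plus cos_plus sin_plus.
by apply: injective_projections => /=; ring.
Qed.

Lemma cpowR_mul x y z : 0 < x -> 0 < y -> cpowR (x * y) z = Cmult (cpowR x z) (cpowR y z).
Proof.
case: z => [a b] x_gt0 y_gt0; rewrite /cpowR /Cmult /Re /Im /=.
rewrite ln_mult // !Rmult_plus_distr_l exp_plus cos_plus sin_plus.
by apply: injective_projections => /=; ring.
Qed.

Lemma cpowR_inv x z : 0 < x -> cpowR (/ x) z = cpowR x (Copp z).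
Proof.
by case: z => [a b] x_gt0; rewrite /cpowR /Re /Im /= ln_Rinv // !Ropp_mult_distr_l_reverse
   -!Ropp_mult_distr_r_reverse.
Qed.

Lemma Cmod_cpowR x z : Cmod (cpowR x z) = Rpower x (Re z).
Proof.
rewrite /cpowR /Cmod /Rpower /=.
set E := exp _; set t := Im z * ln x.
have -> : (E * cos t) ^ 2 + (E * sin t) ^ 2 = E ^ 2.
  by rewrite -[E ^ 2]Rmult_1_r -(sin2_cos2 t) /Rsqr; ring.
by apply: sqrt_pow2; rewrite /E; left; apply: exp_pos.
Qed.

Lemma cpowR_RtoC x r : cpowR x (RtoC r) = RtoC (Rpower x r).
Proof.
rewrite /cpowR /RtoC /Rpower /Re /Im /= Rmult_0_l cos_0 sin_0.
by apply: injective_projections => /=; ring.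
Qed.

Lemma cpowR_1 z : cpowR 1 z = RtoC 1.
Proof.
rewrite /cpowR /RtoC ln_1 !Rmult_0_r exp_0 cos_0 sin_0.
by apply: injective_projections => /=; ring.
Qed.

Lemma cpowR_sub1 x w : 0 < x -> cpowR x (Cminus w (RtoC 1)) = Cmult (RtoC (/ x)) (cpowR x w).
Proof.
case: w => [a b] x_gt0; rewrite /cpowR /Cminus /Cplus /Copp /Cmult /RtoC /Re /Im /=.
have -> : (a + - 1) * ln x = a * ln x + - ln x by ring.
rewrite Ropp_0 Rplus_0_r exp_plus exp_Ropp exp_ln //.
by apply: injective_projections => /=; ring.
Qed.

Lemma neq0_of_Re_gt1 z : 1 < Re z -> z <> RtoC 0.
Proof. by move=> z_gt1 /(f_equal Re); rewrite /Re /= in z_gt1 *; lra. Qed.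

Lemma sub1_neq0_of_Re_gt1 z : 1 < Re z -> Cminus z (RtoC 1) <> RtoC 0.
Proof. by move=> z_gt1 /(f_equal Re); rewrite /Re /= in z_gt1 *; lra. Qed.

Lemma is_RInt_cpowR (w : C) a b : 0 < a -> 0 < b -> w <> RtoC 0 ->
  is_RInt (V := C_R_NormedModule) (fun u => cpowR u (Cminus w (RtoC 1))) a b
    (Cdiv (Cminus (cpowR b w) (cpowR a w)) w).
Proof.
case: w => [p q] a_gt0 b_gt0 w_neq0.
have D_neq0 : p * p + q * q <> 0.
  by move=> D0; apply: w_neq0; congr (_, _); nra.
have t_gt0 t : Rmin a b <= t <= Rmax a b -> 0 < t.
  by case=> t_ge _; apply: Rlt_le_trans t_ge; apply: Rmin_glb_lt.
set L := Cdiv _ _.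
(* [u^(w-1) = (u^w / w)'], written out on real and imaginary parts *)
rewrite [L]surjective_pairing; apply: is_RInt_fct_extend_pair.
- apply: (is_RInt_ext (fun t => / t * (exp (p * ln t) * cos (q * ln t)))).
    move=> t t_in; have t_pos : 0 < t by apply: t_gt0; lra.
    by rewrite cpowR_sub1 // /cpowR /Cmult /RtoC /=; ring.
  evar (l : R); replace (fst L) with l.
  apply: (is_RInt_derive (V := R_CompleteNormedModule)
           (fun t => (p * (exp (p * ln t) * cos (q * ln t))
                      + q * (exp (p * ln t) * sin (q * ln t))) / (p * p + q * q))).
  + move=> t /t_gt0 t_pos; auto_derive; first by repeat split; lra.
    by field; repeat split; lra.
  + move=> t /t_gt0 t_pos.
    by apply: (ex_derive_continuous (V := R_NormedModule)); auto_derive; repeat split; lra.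
  + by rewrite /l /L /minus /plus /opp /Cdiv /Cminus /Cmult /Cinv /Cplus /Copp /=; field.
- apply: (is_RInt_ext (fun t => / t * (exp (p * ln t) * sin (q * ln t)))).
    move=> t t_in; have t_pos : 0 < t by apply: t_gt0; lra.
    by rewrite cpowR_sub1 // /cpowR /Cmult /RtoC /=; ring.
  evar (l : R); replace (snd L) with l.
  apply: (is_RInt_derive (V := R_CompleteNormedModule)
           (fun t => (p * (exp (p * ln t) * sin (q * ln t))
                      - q * (exp (p * ln t) * cos (q * ln t))) / (p * p + q * q))).
  + move=> t /t_gt0 t_pos; auto_derive; first by repeat split; lra.
    by field; repeat split; lra.
  + move=> t /t_gt0 t_pos.
    by apply: (ex_derive_continuous (V := R_NormedModule)); auto_derive; repeat split; lra.
  + by rewrite /l /L /minus /plus /opp /Cdiv /Cminus /Cmult /Cinv /Cplus /Copp /=; field.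
Qed.

(** * Power sums and Rankin's trick *)

(* Sums over [n >= 1] are indexed from [0]: term [k] concerns [n = k + 1]. *)
Local Notation nR k := (INR (S k)).

Lemma Rpower_pos x y : 0 < Rpower x y.
Proof. exact: exp_pos. Qed.

Lemma nR_gt0 k : 0 < nR k.
Proof. by apply: lt_0_INR; lia. Qed.

Lemma nR_ge1 k : 1 <= nR k.
Proof. by rewrite S_INR; have := pos_INR k; lra. Qed.

Lemma exists_nR_ge x : exists N, x <= nR N.
Proof. by have [N N_gt] := INR_unbounded x; exists N; rewrite S_INR; lra. Qed.

(* [n^-t <= int_(n-1)^n x^-t dx], via [ln n - ln (n-1) >= 1/n] and [exp x >= 1 + x] *)
Lemma Rpower_le_telescope t n : 1 < t -> 2 <= n ->
  (t - 1) * Rpower n (- t) <= Rpower (n - 1) (1 - t) - Rpower n (1 - t).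
Proof.
move=> t_gt1 n_ge2; rewrite /Rpower.
set L := ln n; set L1 := ln (n - 1).
have ln_gap : 1 / n <= L - L1.
  have := exp_ineq1_le (ln ((n - 1) / n)).
  rewrite exp_ln; last by apply: Rdiv_lt_0_compat; lra.
  rewrite ln_div -/L -/L1; try lra.
  have -> : (n - 1) / n = 1 - 1 / n by field; lra.
  lra.
have -> : exp ((1 - t) * L1) = exp ((1 - t) * L) * exp ((t - 1) * (L - L1)).
  by rewrite -exp_plus; congr exp; ring.
have -> : exp (- t * L) = exp ((1 - t) * L) / n.
  have -> : - t * L = (1 - t) * L + - ln n by rewrite /L; ring.
  by rewrite exp_plus exp_Ropp exp_ln //; lra.
have E_gt0 : 0 < exp ((1 - t) * L) by apply: exp_pos.
have := exp_ineq1_le ((t - 1) * (L - L1)).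
have : (t - 1) * (1 / n) <= (t - 1) * (L - L1) by apply: Rmult_le_compat_l; lra.
have -> : (t - 1) * (exp ((1 - t) * L) / n) = exp ((1 - t) * L) * ((t - 1) * (1 / n)).
  by field; lra.
nra.
Qed.

Lemma sum_n_Rpower_le t N : 1 < t -> sum_n (fun k => Rpower (nR k) (- t)) N <= t / (t - 1).
Proof.
move=> t_gt1.
have inv_pos : 0 < / (t - 1) by apply: Rinv_0_lt_compat; lra.
have inv_t1 : / (t - 1) * (t - 1) = 1 by field; lra.
suff partial_le : sum_n (fun k => Rpower (nR k) (- t)) N
                  <= 1 + (1 - Rpower (nR N) (1 - t)) / (t - 1).
  have := Rmult_lt_0_compat _ _ (Rpower_pos (nR N) (1 - t)) inv_pos.
  have -> : t / (t - 1) = 1 + / (t - 1) by field; lra.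
  move: partial_le; rewrite /Rdiv; lra.
elim: N => [|N IH].
  rewrite sum_O /= /Rpower ln_1 !Rmult_0_r exp_0; have -> : (1 - 1) / (t - 1) = 0 by field; lra.
  lra.
rewrite sum_Sn -[plus _ _]/(_ + _).
have tele := Rpower_le_telescope t (nR N.+1) t_gt1.
rewrite [nR N.+1 - 1](_ : _ = nR N) in tele; last by rewrite (S_INR N.+1); ring.
have /tele {}tele : 2 <= nR N.+1 by rewrite (S_INR N.+1); have := nR_ge1 N; lra.
have : Rpower (nR N.+1) (- t)
       <= (Rpower (nR N) (1 - t) - Rpower (nR N.+1) (1 - t)) * / (t - 1).
  apply: (Rmult_le_reg_l (t - 1)); first lra.
  by rewrite [X in _ <= X]Rmult_comm Rmult_assoc inv_t1 Rmult_1_r.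
move: IH; rewrite /Rdiv; lra.
Qed.

Lemma ex_series_Rpower t : 1 < t -> ex_series (fun k => Rpower (nR k) (- t)).
Proof.
move=> t_gt1; have [l l_lim] : ex_finite_lim_seq (sum_n (fun k => Rpower (nR k) (- t))).
  apply: (ex_finite_lim_seq_incr _ (t / (t - 1))) => [n | n].
    by rewrite sum_Sn -[plus _ _]/(_ + _); have := Rpower_pos (nR n.+1) (- t); lra.
  exact: sum_n_Rpower_le.
by exists l.
Qed.

Lemma exp_le_compat x y : x <= y -> exp x <= exp y.
Proof. by case=> [/exp_increasing/Rlt_le | ->] //; apply: Rle_refl. Qed.

Lemma Rpower_Rinv x y : 0 < x -> Rpower (/ x) y = Rpower x (- y).
Proof. by move=> x_gt0; rewrite /Rpower ln_Rinv //; congr exp; ring. Qed.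

Lemma Rle_Rpower_base_le1 a x y : 0 < a <= 1 -> y <= x -> Rpower a x <= Rpower a y.
Proof.
move=> a_bounds yx; apply: exp_le_compat.
have : ln a <= 0 by rewrite -ln_1; apply: ln_le; lra.
nra.
Qed.

(* Size of the error at [x] when a Dirichlet series is cut at the hyperbola [x <= 1/a]:
   [a^sg] inside (from the boundary terms [a^s]), [x^-sg] outside. *)
Definition rankin_weight (a sg x : R) : R :=
  if Rle_dec a (/ x) then Rpower a sg else Rpower x (- sg).

Lemma rankin_weight_gt0 a sg x : 0 < rankin_weight a sg x.
Proof. by rewrite /rankin_weight; case: Rle_dec => ?; apply: Rpower_pos. Qed.

Lemma rankin_weight_near a sg x : a <= / x -> rankin_weight a sg x = Rpower a sg.
Proof. by rewrite /rankin_weight; case: Rle_dec. Qed.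

Lemma rankin_weight_far a sg x : / x < a -> rankin_weight a sg x = Rpower x (- sg).
Proof. by rewrite /rankin_weight; case: Rle_dec => //= ? ?; lra. Qed.

Lemma rankin_weight_le a x sg t : 0 < a -> 0 < x -> 0 <= t <= sg ->
  rankin_weight a sg x <= Rpower a (sg - t) * Rpower x (- t).
Proof.
move=> a_gt0 x_gt0 [t_ge0 t_le]; rewrite /rankin_weight /Rpower -exp_plus.
have ax_gt0 : 0 < a * x by apply: Rmult_lt_0_compat.
have ln_ax : ln (a * x) = ln a + ln x by rewrite ln_mult.
case: Rle_dec => [a_le | a_gt]; apply: exp_le_compat.
- have : ln (a * x) <= 0.
    rewrite -ln_1; apply: ln_le => //.
    by rewrite -(Rinv_l x); [apply: Rmult_le_compat_r; lra | lra].
  rewrite ln_ax => ln_le0.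
  have := Rmult_le_compat_l t _ _ t_ge0 ln_le0; lra.
- have : 0 < ln (a * x).
    rewrite -ln_1; apply: ln_increasing; first lra.
    by rewrite -(Rinv_l x); [apply: Rmult_lt_compat_r; lra | lra].
  rewrite ln_ax => ln_gt0.
  have := Rmult_le_compat_l (sg - t) _ _ ltac:(lra) (Rlt_le _ _ ln_gt0); lra.
Qed.

Lemma sum_n_rankin a sg t N : 0 < a -> 1 < t <= sg ->
  sum_n (fun i => sum_n (fun j => rankin_weight a sg (nR i * nR j)) N) N
  <= Rpower a (sg - t) * (t / (t - 1)) ^ 2.
Proof.
move=> a_gt0 t_bounds.
set x := fun k => Rpower (nR k) (- t).
apply: Rle_trans (_ : Rpower a (sg - t) * sum_n x N ^ 2 <= _); last first.
  apply: Rmult_le_compat_l; first exact: Rlt_le (Rpower_pos _ _).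
  have x_sum_ge0 : 0 <= sum_n x N.
    apply: Rle_trans (sum_n_m_le (fun _ => 0) x 0 N _).
      by rewrite (sum_n_m_const_zero (G := R_AbelianMonoid)); apply: Rle_refl.
    by move=> k; apply: Rlt_le (Rpower_pos _ _).
  apply: pow_incr; split => //; apply: sum_n_Rpower_le; lra.
rewrite -sum_n_sqr Rmult_sum_n_l.
apply: sum_n_m_le => i; rewrite Rmult_sum_n_l; apply: sum_n_m_le => j.
rewrite /x Rpower_mult_distr; try exact: nR_gt0.
by apply: rankin_weight_le; [| apply: Rmult_lt_0_compat; apply: nR_gt0 | lra].
Qed.

Lemma ball_Rabs x (d : posreal) y : ball (M := R_UniformSpace) x d y <-> Rabs (y - x) < d.
Proof. by []. Qed.

Lemma ball_0_Rabs (d : posreal) y : ball (M := R_UniformSpace) 0 d y <-> Rabs y < d.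
Proof. by rewrite ball_Rabs Rminus_0_r. Qed.

Lemma filterlim_of_norm_le {T : Type} {F : (T -> Prop) -> Prop} {FF : Filter F}
    {K : AbsRing} {V : NormedModule K} (u : T -> V) (l : V) (c : R) (g : T -> R) :
  F (fun x => norm (minus (u x) l) <= c * g x) -> filterlim g F (locally 0) ->
  filterlim u F (locally l).
Proof.
move=> u_le g_lim; apply/filterlim_locally_ball_norm => eps.
have c1_gt0 : 0 < Rabs c + 1 by have := Rabs_pos c; lra.
have eps'_gt0 : 0 < eps / (Rabs c + 1) by apply: Rdiv_lt_0_compat => //; apply: cond_pos.
move/filterlim_locally: g_lim => /(_ (mkposreal _ eps'_gt0)) g_small.
apply: filter_imp (filter_and _ _ u_le g_small) => x [ux gx].
rewrite /ball_norm; apply: Rle_lt_trans ux _.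
move/ball_0_Rabs: gx => /= gx.
apply: Rle_lt_trans (Rle_abs _) _; rewrite Rabs_mult.
apply: Rle_lt_trans (_ : Rabs c * (eps / (Rabs c + 1)) < eps).
  by apply: Rmult_le_compat_l; [apply: Rabs_pos | lra].
have -> : Rabs c * (eps / (Rabs c + 1)) = eps - eps / (Rabs c + 1) by field; lra.
lra.
Qed.

Lemma filterlim_Rpower_0 al : 0 < al -> filterlim (fun x => Rpower x al) (at_right 0) (locally 0).
Proof.
move=> al_gt0; apply/filterlim_locally => eps.
exists (mkposreal _ (exp_pos (ln eps / al))) => x /ball_0_Rabs x_near x_gt0; apply/ball_0_Rabs.
rewrite Rabs_pos_eq in x_near; last lra.
rewrite Rabs_pos_eq; last exact: Rlt_le (Rpower_pos _ _).
have ln_x_lt : ln x < ln eps / al by rewrite -[ln eps / al]ln_exp; apply: ln_increasing.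
rewrite /Rpower -[pos eps](exp_ln eps (cond_pos eps)); apply: exp_increasing.
have -> : ln eps = al * (ln eps / al) by field; lra.
by apply: Rmult_lt_compat_l.
Qed.

Lemma filterlim_inv_nR : filterlim (fun N => / nR N) eventually (at_right 0).
Proof.
move=> P [d Pd]; have [N0 N0_gt] := INR_unbounded (/ d).
exists N0 => N /le_INR N_ge; apply: Pd; last exact: Rinv_0_lt_compat (nR_gt0 N).
apply/ball_0_Rabs; have d_gt0 := cond_pos d; have nR_gt := nR_gt0 N.
rewrite Rabs_pos_eq; last exact: Rlt_le (Rinv_0_lt_compat _ nR_gt).
rewrite -[pos d]Rinv_inv; apply: Rinv_lt_contravar.
  by apply: Rmult_lt_0_compat => //; apply: Rinv_0_lt_compat.
by rewrite S_INR; lra.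
Qed.

Lemma is_RInt_gen_at_right {V : NormedModule R_AbsRing} (f : R -> V) (I : R -> V) a b l :
  a < b -> (forall x, a < x < b -> is_RInt f x b (I x)) ->
  filterlim I (at_right a) (locally l) -> is_RInt_gen f (at_right a) (at_point b) l.
Proof.
move=> ab I_int I_lim P /I_lim P_I.
have near_a : at_right a (fun x => a < x < b).
  have d_gt0 : 0 < b - a by lra.
  exists (mkposreal _ d_gt0) => x /ball_Rabs /= /Rabs_lt_between x_near x_gt; lra.
apply: (Filter_prod _ _ _ _ (fun y => y = b) (filter_and _ _ near_a P_I) (Logic.eq_refl b)).
move=> x _ [x_in P_Ix] ->.
by exists (I x); split => //; apply: I_int.
Qed.

(** * The Dirichlet series of [mu] is [1 / zeta] *)

Definition zeta_term (z : C) (k : nat) : C := cpowR (nR k) (Copp z).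

Definition mobius_term (z : C) (k : nat) : C := Cmult (RtoC (mobius k.+1)) (zeta_term z k).

Definition mobius_dirichlet (z : C) : C :=
  (Series (fun k => Re (mobius_term z k)), Series (fun k => Im (mobius_term z k))).

Lemma Cmod_zeta_term z k : Cmod (zeta_term z k) = Rpower (nR k) (- Re z).
Proof. exact: Cmod_cpowR. Qed.

Lemma Cmod_mobius_term z k : Cmod (mobius_term z k) <= Rpower (nR k) (- Re z).
Proof.
rewrite Cmod_mult Cmod_R Cmod_zeta_term -[X in _ <= X]Rmult_1_l.
apply: Rmult_le_compat_r; [exact: Rlt_le (Rpower_pos _ _) | exact: mobius_abs_le1].
Qed.

Lemma is_series_C_dominated (u : nat -> C) (b : nat -> R) :
  (forall k, Cmod (u k) <= b k) -> ex_series b ->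
  is_series (V := C_NormedModule) u
    (Series (fun k => Re (u k)), Series (fun k => Im (u k))).
Proof.
move=> u_le b_sum.
have [re_sum im_sum] : ex_series (fun k => Re (u k)) /\ ex_series (fun k => Im (u k)).
  split; apply: (ex_series_le (V := R_CompleteNormedModule) _ b) b_sum => k;
  apply: Rle_trans (u_le k); [exact: re_le_Cmod | exact: Rle_trans (Rmax_r _ _) (Rmax_Cmod _)].
move/Series_correct/filterlim_locally: re_sum => re_lim.
move/Series_correct/filterlim_locally: im_sum => im_lim.
apply/filterlim_locally => eps.
apply: filter_imp (filter_and _ _ (re_lim eps) (im_lim eps)) => N [re_near im_near].
by split; [rewrite [fst (sum_n _ _)]sum_n_fst | rewrite [snd (sum_n _ _)]sum_n_snd].
Qed.

Lemma is_series_zeta z : 1 < Re z -> is_series (V := C_NormedModule) (zeta_term z) (zeta z).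
Proof.
move=> z_gt1; apply: (is_series_C_dominated _ (fun k => Rpower (nR k) (- Re z))).
  by move=> k; rewrite Cmod_zeta_term; apply: Rle_refl.
exact: ex_series_Rpower.
Qed.

Lemma is_series_mobius_dirichlet z : 1 < Re z ->
  is_series (V := C_NormedModule) (mobius_term z) (mobius_dirichlet z).
Proof.
move=> z_gt1; apply: (is_series_C_dominated _ (fun k => Rpower (nR k) (- Re z))).
  exact: Cmod_mobius_term.
exact: ex_series_Rpower.
Qed.

(* [filterlim_mult] is stated for the [Cmod]-balls of [C_AbsRing], whose neighbourhoods
   coincide with those of the product uniform structure of [C]. *)
Lemma filterlim_Cmult {T : Type} {F : (T -> Prop) -> Prop} {FF : Filter F} (f g : T -> C) x y :
  filterlim f F (locally x) -> filterlim g F (locally y) ->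
  filterlim (fun t => Cmult (f t) (g t)) F (locally (Cmult x y)).
Proof.
move=> fx gy.
apply: filterlim_filter_le_2 (locally_norm_le_locally (V := C_NormedModule) _) _.
apply: (filterlim_comp_2 f g Cmult _ _ (filterlim_mult (K := C_AbsRing) x y)).
- exact: filterlim_filter_le_2 (locally_le_locally_norm (V := C_NormedModule) _) fx.
- exact: filterlim_filter_le_2 (locally_le_locally_norm (V := C_NormedModule) _) gy.
Qed.

Lemma partial_products_cvg z w : 1 < Re z -> 1 < Re w ->
  filterlim (fun N => Cmult (sum_n (mobius_term z) N) (sum_n (zeta_term w) N)) eventually
    (locally (Cmult (mobius_dirichlet z) (zeta w))).
Proof.
move=> z_gt1 w_gt1.
by apply: filterlim_Cmult; [apply: is_series_mobius_dirichlet | apply: is_series_zeta].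
Qed.

Lemma Cmod_sum_n2_rankin (W : nat -> nat -> C) a sg t N : 0 < a -> 1 < t <= sg ->
  (forall i j, Cmod (W i j) <= rankin_weight a sg (nR i * nR j)) ->
  Cmod (sum_n (fun i => sum_n (W i) N) N) <= Rpower a (sg - t) * (t / (t - 1)) ^ 2.
Proof.
move=> a_gt0 t_bounds W_le.
apply: Rle_trans (Cmod_sum_n _ _) _; apply: Rle_trans (sum_n_rankin a sg t N a_gt0 t_bounds).
apply: sum_n_m_le => i; apply: Rle_trans (Cmod_sum_n _ _) _.
exact: sum_n_m_le.
Qed.

Lemma mobius_term_mul_zeta_term z i j :
  Cmult (mobius_term z i) (zeta_term z j)
  = Cmult (RtoC (mobius i.+1)) (cpowR (INR (i.+1 * j.+1)) (Copp z)).
Proof.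
rewrite /mobius_term /zeta_term mult_INR cpowR_mul ?Cmult_assoc //; exact: nR_gt0.
Qed.

Lemma partial_product_sub1_le z t N : 1 < t <= Re z ->
  Cmod (Cminus (Cmult (sum_n (mobius_term z) N) (sum_n (zeta_term z) N)) (RtoC 1))
  <= Rpower (/ nR N) (Re z - t) * (t / (t - 1)) ^ 2.
Proof.
move=> t_bounds.
set W := fun i j => Cmult (RtoC (mobius i.+1)) (cpowR (INR (i.+1 * j.+1)) (Copp z)).
set near := fun i j => (i.+1 * j.+1 <= N.+1)%N.
have -> : Cmult (sum_n (mobius_term z) N) (sum_n (zeta_term z) N)
          = plus (sum_n (fun i => sum_n (fun j => if near i j then W i j else zero) N) N)
                 (sum_n (fun i => sum_n (fun j => if near i j then zero else W i j) N) N).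
  rewrite -sum_n_plus Cmult_sum_n_r; apply: sum_n_ext => i.
  rewrite -sum_n_plus Cmult_sum_n_l; apply: sum_n_ext => j.
  by rewrite mobius_term_mul_zeta_term; case: (near i j); rewrite ?plus_zero_l ?plus_zero_r.
rewrite (sum_mobius_hyperbola (fun m => cpowR (INR m) (Copp z))) -[INR 1]/1 cpowR_1.
set far := sum_n _ N.
have -> : Cminus (plus (RtoC 1) far) (RtoC 1) = far by rewrite /plus /=; field.
apply: Cmod_sum_n2_rankin; [exact: Rinv_0_lt_compat (nR_gt0 N) | lra | move=> i j].
rewrite /near; case: (leqP (i.+1 * j.+1) N.+1) => [_ | far_ij].
  by rewrite [Cmod _]Cmod_0; apply: Rlt_le (rankin_weight_gt0 _ _ _).
rewrite rankin_weight_far; last first.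
  apply: Rinv_lt_contravar.
    by apply: Rmult_lt_0_compat (nR_gt0 N) (Rmult_lt_0_compat _ _ (nR_gt0 i) (nR_gt0 j)).
  by rewrite -mult_INR; apply: lt_INR; apply/ltP.
rewrite /W Cmod_mult Cmod_R Cmod_cpowR -mult_INR -[X in _ <= X]Rmult_1_l.
by apply: Rmult_le_compat_r; [exact: Rlt_le (Rpower_pos _ _) | exact: mobius_abs_le1].
Qed.

Lemma mobius_dirichlet_mul_zeta z : 1 < Re z -> Cmult (mobius_dirichlet z) (zeta z) = RtoC 1.
Proof.
move=> z_gt1; set t := (1 + Re z) / 2.
apply: (filterlim_locally_unique (V := C_NormedModule) _ _ _
          (partial_products_cvg z z z_gt1 z_gt1)).
apply: (filterlim_of_norm_le _ _ ((t / (t - 1)) ^ 2) (fun N => Rpower (/ nR N) (Re z - t))).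
  apply: filter_forall => N; rewrite Rmult_comm.
  by apply: partial_product_sub1_le; rewrite /t; lra.
by apply: filterlim_comp filterlim_inv_nR (filterlim_Rpower_0 _ _); rewrite /t; lra.
Qed.

Lemma Cinv_zeta z : 1 < Re z -> Cinv (zeta z) = mobius_dirichlet z.
Proof.
move=> z_gt1; have inv := mobius_dirichlet_mul_zeta z z_gt1.
have zeta_neq0 : zeta z <> RtoC 0.
  by move=> zeta0; move: inv; rewrite zeta0 Cmult_0_r => /(f_equal fst) /=; lra.
by rewrite -[Cinv _]Cmult_1_l -inv -Cmult_assoc Cinv_r // Cmult_1_r.
Qed.

(** * Decomposition of [f_eps] *)

Lemma sum_n_indicator_nat k N :
  sum_n (fun j => if (j.+1 <= k)%N then 1 else 0) N = INR (minn k N.+1).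
Proof.
elim: N => [|N IH]; first by rewrite sum_O; case: k => [|[|k]].
rewrite sum_Sn IH -[plus _ _]/(_ + _); case: (leqP N.+2 k) => [k_ge | k_lt].
  by rewrite (_ : minn k N.+1 = N.+1) 1?(_ : minn k N.+2 = N.+2) -1?S_INR //; lia.
by rewrite Rplus_0_r (_ : minn k N.+1 = k) //; lia.
Qed.

Lemma Int_part_count y N : 0 <= y <= nR N ->
  IZR (Int_part y) = sum_n (fun j => if Rle_dec (nR j) y then 1 else 0) N.
Proof.
move=> y_bounds; have [K_le K_gt] := base_Int_part y.
have /lt_IZR K_gt_m1 : IZR (-1) < IZR (Int_part y) by rewrite [IZR (-1)]/=; lra.
have k_def : IZR (Int_part y) = INR (Z.to_nat (Int_part y)).
  by rewrite INR_IZR_INZ Z2Nat.id //; lia.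
rewrite k_def in K_le K_gt *; set k := Z.to_nat _ in K_le K_gt *.
rewrite (sum_n_ext _ (fun j => if (j.+1 <= k)%N then 1 else 0)).
  rewrite sum_n_indicator_nat (_ : minn k N.+1 = k) //.
  by apply/minn_idPl/leP/INR_le; lra.
move=> j; case: Rle_dec => jy; cbn [is_left]; case: leqP => // /leP/le_INR.
- by rewrite S_INR in jy; lra.
- lra.
Qed.

Definition mobius_weight (eps : R) (i : nat) : R := mobius i.+1 * Rpower (nR i) (- eps).

Lemma Rabs_mobius_weight eps i : 0 <= eps -> Rabs (mobius_weight eps i) <= 1.
Proof.
move=> eps_ge0; rewrite Rabs_mult (Rabs_pos_eq (Rpower _ _)); last exact: Rlt_le (Rpower_pos _ _).
have : Rpower (nR i) (- eps) <= 1.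
  rewrite /Rpower -exp_0; apply: exp_le_compat.
  have : 0 <= ln (nR i) by rewrite -ln_1; apply: ln_le; [lra | apply: nR_ge1].
  nra.
have := mobius_abs_le1 i.+1; have := Rabs_pos (mobius i.+1); have := Rpower_pos (nR i) (- eps).
nra.
Qed.

Definition mobius_series (t : R) : R := Series (fun k => mobius k.+1 * Rpower (nR k) (- t)).

Lemma is_series_mobius_series t : 1 < t ->
  is_series (fun k => mobius k.+1 * Rpower (nR k) (- t)) (mobius_series t).
Proof.
move=> t_gt1; apply: Series_correct.
apply: (ex_series_le (V := R_CompleteNormedModule) _ _ _ (ex_series_Rpower t t_gt1)) => k.
rewrite -[norm _]/(Rabs _) Rabs_mult (Rabs_pos_eq (Rpower _ _)).
  by have := mobius_abs_le1 k.+1; have := Rpower_pos (nR k) (- t); nra.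
exact: Rlt_le (Rpower_pos _ _).
Qed.

Lemma is_series_finite (h : nat -> R) N : (forall k, (N < k)%N -> h k = 0) ->
  is_series h (sum_n h N).
Proof.
move=> h_eq0; apply: (filterlim_ext_loc (fun _ => sum_n h N)); last exact: filterlim_const.
exists N.+1 => n N_lt.
have := sum_n_m_sum_n h N n ltac:(lia); rewrite (sum_n_m_ext_loc _ (fun _ => 0)).
  rewrite (sum_n_m_const_zero (G := R_AbelianMonoid)) -[minus _ _]/(sum_n h n - sum_n h N).
  by rewrite -[zero]/0 => /esym /Rminus_diag_uniq /esym.
by move=> k [k_gt _]; apply: h_eq0; apply/ltP.
Qed.

Lemma mobius_dirichlet_RtoC t : mobius_dirichlet (RtoC t) = RtoC (mobius_series t).
Proof.
rewrite /mobius_dirichlet /mobius_term /zeta_term /mobius_series.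
have term k : Cmult (RtoC (mobius k.+1)) (cpowR (nR k) (Copp (RtoC t)))
              = RtoC (mobius k.+1 * Rpower (nR k) (- t)).
  rewrite (_ : Copp (RtoC t) = RtoC (- t)) ?cpowR_RtoC ?RtoC_mult //.
  by apply: injective_projections => /=; ring.
rewrite (Series_ext _ _ (fun k => f_equal fst (term k))).
rewrite (Series_ext _ (fun _ => 0) (fun k => f_equal snd (term k))).
have := is_series_finite (fun _ => 0) 0 (fun _ _ => Logic.eq_refl).
by rewrite sum_O => /is_series_unique ->.
Qed.

Definition indicator_le (b u : R) : R := if Rle_dec u b then 1 else 0.

Lemma le_Rinv_iff x y : 0 < y -> x <= / y <-> x * y <= 1.
Proof. by move=> y_gt0; rewrite (Rle_div_r _ _ _ y_gt0) /Rdiv Rmult_1_l. Qed.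

Lemma indicator_le_hyperbola m n u : 0 < m -> 0 < n -> 0 < u ->
  indicator_le (/ (m * n)) u = if Rle_dec n (/ (m * u)) then 1 else 0.
Proof.
move=> m_gt0 n_gt0 u_gt0; rewrite /indicator_le.
have mn_gt0 := Rmult_lt_0_compat _ _ m_gt0 n_gt0.
have mu_gt0 := Rmult_lt_0_compat _ _ m_gt0 u_gt0.
have same : u * (m * n) = n * (m * u) by ring.
case: Rle_dec => u_le; case: Rle_dec => n_le; cbn [is_left] => //;
  by move: u_le n_le; rewrite !le_Rinv_iff //; lra.
Qed.

Definition floor_sum (eps : R) (N : nat) (u : R) : R :=
  sum_n (fun i => sum_n (fun j => mobius_weight eps i * indicator_le (/ (nR i * nR j)) u) N) N.

Lemma Int_part_floor_sum eps N u i : 0 < u -> / u <= nR N ->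
  mobius_weight eps i * IZR (Int_part (/ (nR i * u)))
  = sum_n (fun j => mobius_weight eps i * indicator_le (/ (nR i * nR j)) u) N.
Proof.
move=> u_gt0 u_ge; rewrite -Rmult_sum_n_l; congr (_ * _).
have ni_gt0 := nR_gt0 i; have ni_ge1 := nR_ge1 i.
rewrite (Int_part_count _ N); last first.
  split; first by apply: Rlt_le; apply: Rinv_0_lt_compat; nra.
  apply: Rle_trans u_ge; apply: Rinv_le_contravar => //; nra.
by apply: sum_n_ext => j; rewrite indicator_le_hyperbola //; apply: nR_gt0.
Qed.

Lemma f_eps_decomp eps N u : 0 < eps -> 0 < u -> / u <= nR N ->
  f_eps eps u = mobius_series (1 + eps) / u - floor_sum eps N u.
Proof.
move=> eps_gt0 u_gt0 u_ge; apply: is_series_unique.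
set h := fun k => mobius_weight eps k * IZR (Int_part (/ (nR k * u))).
have h_sum : is_series h (floor_sum eps N u).
  rewrite (_ : floor_sum eps N u = sum_n h N); last first.
    by apply: sum_n_ext => i; rewrite /h (Int_part_floor_sum eps N).
  apply: is_series_finite => k /leP /le_INR N_lt; rewrite /h.
  have nu_gt1 : 1 < nR k * u.
    have := Rmult_le_compat_r u _ _ (Rlt_le _ _ u_gt0) u_ge; rewrite Rinv_l; last lra.
    have : nR N < nR k by rewrite (S_INR k); lra.
    nra.
  rewrite -(Int_part_spec (/ (nR k * u)) 0) ?Rmult_0_r //.
  split; last by apply: Rlt_le; apply: Rinv_0_lt_compat; lra.
  by have := Rinv_lt_contravar 1 (nR k * u) ltac:(lra) nu_gt1; rewrite Rinv_1 [IZR 0]/=; lra.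
have term k : mobius k.+1 * Rpower (nR k) (- (1 + eps)) * / u - h k
              = mobius k.+1 / Rpower (nR k) eps * frac_part (/ (nR k * u)).
  have nk_gt := nR_gt0 k; have pow_gt := Rpower_pos (nR k) eps.
  rewrite /h /mobius_weight /frac_part !Rpower_Ropp Rpower_plus Rpower_1 //.
  by field; lra.
have c_sum := is_series_scal_r (/ u) _ _ (is_series_mobius_series (1 + eps) ltac:(lra)).
exact: is_series_ext term (is_series_minus _ _ _ _ c_sum h_sum).
Qed.

Definition indicator_integral (s : C) (a b : R) : C :=
  if Rle_dec a b then Cdiv (Cminus (cpowR b s) (cpowR a s)) s else RtoC 0.

Lemma is_RInt_indicator_le s a b : 0 < a <= 1 -> 0 < b <= 1 -> s <> RtoC 0 ->
  is_RInt (V := C_R_NormedModule)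
    (fun u => Cmult (RtoC (indicator_le b u)) (cpowR u (Cminus s (RtoC 1)))) a 1
    (indicator_integral s a b).
Proof.
move=> a_bounds b_bounds s_neq0.
have vanish c : b <= c <= 1 -> is_RInt (V := C_R_NormedModule)
    (fun u => Cmult (RtoC (indicator_le b u)) (cpowR u (Cminus s (RtoC 1)))) c 1 zero.
  move=> bc; rewrite -(scal_zero_r (1 - c)).
  apply: is_RInt_ext (is_RInt_const _ _ _) => u [u_gt _].
  rewrite /indicator_le; case: Rle_dec => u_le; cbn [is_left].
    by move: u_gt; rewrite Rmin_left; lra.
  by rewrite Cmult_0_l.
rewrite /indicator_integral; case: Rle_dec => ab; cbn [is_left]; last by apply: vanish; lra.
rewrite -[Cdiv _ _]plus_zero_r.
apply: is_RInt_Chasles (vanish b _); last lra.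
apply: is_RInt_ext (is_RInt_cpowR s a b _ _ s_neq0) => [u [_ u_lt] | |]; try lra.
rewrite /indicator_le; case: Rle_dec => u_le; cbn [is_left].
  by rewrite Cmult_1_l.
by move: u_lt; rewrite Rmax_right; lra.
Qed.

Lemma is_RInt_sum_n {V : NormedModule R_AbsRing} (F : nat -> R -> V) (L : nat -> V) a b N :
  (forall i, is_RInt (F i) a b (L i)) ->
  is_RInt (fun u => sum_n (fun i => F i u) N) a b (sum_n L N).
Proof.
move=> F_int; elim: N => [|N IH].
  by rewrite sum_O; apply: is_RInt_ext (F_int 0%N) => u _; rewrite sum_O.
rewrite sum_Sn; apply: is_RInt_ext (is_RInt_plus _ _ _ _ _ _ IH (F_int N.+1)) => u _.
by rewrite sum_Sn.
Qed.

Definition floor_integral (eps : R) (s : C) (a : R) (N : nat) : C :=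
  sum_n (fun i => sum_n (fun j =>
    Cmult (RtoC (mobius_weight eps i)) (indicator_integral s a (/ (nR i * nR j)))) N) N.

Lemma is_RInt_floor_sum eps s a N : 0 < a <= 1 -> s <> RtoC 0 ->
  is_RInt (V := C_R_NormedModule)
    (fun u => Cmult (RtoC (floor_sum eps N u)) (cpowR u (Cminus s (RtoC 1)))) a 1
    (floor_integral eps s a N).
Proof.
move=> a_bounds s_neq0.
apply: (is_RInt_ext (fun u => sum_n (fun i => sum_n (fun j => scal (mobius_weight eps i)
          (Cmult (RtoC (indicator_le (/ (nR i * nR j)) u)) (cpowR u (Cminus s (RtoC 1))))) N) N)).
  move=> u _; rewrite /floor_sum RtoC_sum_n Cmult_sum_n_r; apply: sum_n_ext => i.
  rewrite RtoC_sum_n Cmult_sum_n_r; apply: sum_n_ext => j.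
  by rewrite scal_R_Cmult RtoC_mult Cmult_assoc.
apply: is_RInt_sum_n => i; apply: is_RInt_sum_n => j.
rewrite -scal_R_Cmult; apply: is_RInt_scal; apply: is_RInt_indicator_le => //.
have ni := nR_ge1 i; have nj := nR_ge1 j.
split; first by apply: Rinv_0_lt_compat; nra.
by rewrite -Rinv_1; apply: Rinv_le_contravar; [lra | nra].
Qed.

Lemma is_RInt_scaled_inv c s a : 0 < a -> 1 < Re s ->
  is_RInt (V := C_R_NormedModule)
    (fun u => Cmult (RtoC (c / u)) (cpowR u (Cminus s (RtoC 1)))) a 1
    (Cmult (RtoC c) (Cdiv (Cminus (RtoC 1) (cpowR a (Cminus s (RtoC 1)))) (Cminus s (RtoC 1)))).
Proof.
move=> a_gt0 s_gt1.
have := is_RInt_scal _ _ _ c _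
  (is_RInt_cpowR _ a 1 a_gt0 Rlt_0_1 (sub1_neq0_of_Re_gt1 s s_gt1)).
rewrite cpowR_1 scal_R_Cmult; apply: is_RInt_ext => u [u_gt _].
have u_gt0 : 0 < u by apply: Rlt_trans u_gt; apply: Rmin_glb_lt; lra.
by rewrite scal_R_Cmult cpowR_sub1 // Cmult_assoc /Rdiv RtoC_mult.
Qed.

Lemma is_RInt_f_eps_segment eps s a N : 0 < eps -> 1 < Re s -> 0 < a <= 1 -> / a <= nR N ->
  is_RInt (V := C_R_NormedModule)
    (fun u => Cmult (RtoC (f_eps eps u)) (cpowR u (Cminus s (RtoC 1)))) a 1
    (Cminus (Cmult (RtoC (mobius_series (1 + eps)))
                   (Cdiv (Cminus (RtoC 1) (cpowR a (Cminus s (RtoC 1)))) (Cminus s (RtoC 1))))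
            (floor_integral eps s a N)).
Proof.
move=> eps_gt0 s_gt1 a_bounds a_ge.
apply: is_RInt_ext (is_RInt_minus _ _ _ _ _ _
  (is_RInt_scaled_inv (mobius_series (1 + eps)) s a (proj1 a_bounds) s_gt1)
  (is_RInt_floor_sum eps s a N a_bounds (neq0_of_Re_gt1 s s_gt1))).
move=> u [u_gt u_lt]; rewrite Rmin_left in u_gt; last lra.
rewrite (f_eps_decomp eps N u) //; try lra.
  rewrite RtoC_minus -[minus _ _]/(Cminus _ _).
  match goal with |- ?x = ?y => change (@eq C x y) end.
  by field.
apply: Rle_trans a_ge; apply: Rlt_le; apply: Rinv_lt_contravar => //; nra.
Qed.

Lemma mobius_term_shift_mul_zeta_term s eps i j :
  Cmult (mobius_term (Cplus s (RtoC eps)) i) (zeta_term s j)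
  = Cmult (RtoC (mobius_weight eps i)) (cpowR (/ (nR i * nR j)) s).
Proof.
have shift : Copp (Cplus s (RtoC eps)) = Cplus (Copp s) (RtoC (- eps)).
  by apply: injective_projections => /=; ring.
rewrite /mobius_term /zeta_term /mobius_weight shift cpowR_add cpowR_RtoC RtoC_mult.
rewrite cpowR_inv ?cpowR_mul; try exact: nR_gt0.
  by ring.
by apply: Rmult_lt_0_compat; apply: nR_gt0.
Qed.

Lemma floor_integral_approx eps s a t N : 0 <= eps -> 0 < a -> 1 < t <= Re s ->
  Cmod (Cminus (Cmult s (floor_integral eps s a N))
               (Cmult (sum_n (mobius_term (Cplus s (RtoC eps))) N) (sum_n (zeta_term s) N)))
  <= Rpower a (Re s - t) * (t / (t - 1)) ^ 2.
Proof.
move=> eps_ge0 a_gt0 t_bounds.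
have s_neq0 : s <> RtoC 0 by apply: neq0_of_Re_gt1; lra.
set w := mobius_weight eps.
rewrite /floor_integral Cmult_sum_n_r Cmult_sum_n_l sum_n_Cminus.
rewrite (sum_n_ext _ (fun i => sum_n (fun j =>
    Cminus (Cmult s (Cmult (RtoC (w i)) (indicator_integral s a (/ (nR i * nR j)))))
           (Cmult (RtoC (w i)) (cpowR (/ (nR i * nR j)) s))) N)); last first.
  move=> i; rewrite Cmult_sum_n_l Cmult_sum_n_l sum_n_Cminus; apply: sum_n_ext => j.
  by rewrite mobius_term_shift_mul_zeta_term.
apply: Cmod_sum_n2_rankin => // i j.
have ij_gt0 : 0 < nR i * nR j by apply: Rmult_lt_0_compat; apply: nR_gt0.
have w_le := Rabs_mobius_weight eps i eps_ge0.
rewrite /indicator_integral; case: Rle_dec => a_le; cbn [is_left].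
- rewrite rankin_weight_near //.
  have -> : Cminus (Cmult s (Cmult (RtoC (w i))
                    (Cdiv (Cminus (cpowR (/ (nR i * nR j)) s) (cpowR a s)) s)))
                   (Cmult (RtoC (w i)) (cpowR (/ (nR i * nR j)) s))
            = Copp (Cmult (RtoC (w i)) (cpowR a s)) by field.
  rewrite Cmod_opp Cmod_mult Cmod_R Cmod_cpowR -[X in _ <= X]Rmult_1_l.
  by apply: Rmult_le_compat_r => //; apply: Rlt_le; apply: Rpower_pos.
- rewrite rankin_weight_far; last lra.
  have -> : Cminus (Cmult s (Cmult (RtoC (w i)) (RtoC 0)))
                   (Cmult (RtoC (w i)) (cpowR (/ (nR i * nR j)) s))
            = Copp (Cmult (RtoC (w i)) (cpowR (/ (nR i * nR j)) s)) by field.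
  rewrite Cmod_opp Cmod_mult Cmod_R Cmod_cpowR Rpower_Rinv // -[X in _ <= X]Rmult_1_l.
  by apply: Rmult_le_compat_r => //; apply: Rlt_le; apply: Rpower_pos.
Qed.

(** * The limit [a -> 0] *)

Section NearZero.

Variables (eps : R) (s : C).
Hypotheses (eps_gt0 : 0 < eps) (s_gt1 : 1 < Re s).

Let F u := Cmult (RtoC (f_eps eps u)) (cpowR u (Cminus s (RtoC 1))).
Let I a := RInt (V := C_R_CompleteNormedModule) F a 1.
Let c := mobius_series (1 + eps).
Let P N := Cmult (sum_n (mobius_term (Cplus s (RtoC eps))) N) (sum_n (zeta_term s) N).
Let AZ := Cmult (mobius_dirichlet (Cplus s (RtoC eps))) (zeta s).
Let L := Cminus (Cmult (RtoC c) (Cinv (Cminus s (RtoC 1)))) (Cmult AZ (Cinv s)).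
Let t := (1 + Re s) / 2.
Let K := Rabs c / Cmod (Cminus s (RtoC 1)) + (t / (t - 1)) ^ 2 / Cmod s.

Let s_neq0 := neq0_of_Re_gt1 s s_gt1.
Let s1_neq0 := sub1_neq0_of_Re_gt1 s s_gt1.
Let s_mod := proj1 (Cmod_gt_0 s) s_neq0.
Let t_bounds : 1 < t <= Re s. Proof. by have := s_gt1; rewrite /t; lra. Qed.

Lemma is_RInt_f_eps_RInt a : 0 < a <= 1 -> is_RInt F a 1 (I a).
Proof.
move=> a_bounds; have [N a_ge] := exists_nR_ge (/ a).
apply: (RInt_correct (V := C_R_CompleteNormedModule)); eexists.
exact: is_RInt_f_eps_segment eps_gt0 s_gt1 a_bounds a_ge.
Qed.

Lemma RInt_f_eps_sub_le_partial a N : 0 < a < 1 -> / a <= nR N ->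
  Cmod (Cminus (I a) L) <= K * Rpower a (Re s - t) + Cmod (Cminus (P N) AZ) / Cmod s.
Proof.
move=> a_bounds a_ge.
have I_eq : I a = Cminus (Cmult (RtoC c) (Cdiv (Cminus (RtoC 1) (cpowR a (Cminus s (RtoC 1))))
                                              (Cminus s (RtoC 1))))
                         (floor_integral eps s a N).
  apply: (is_RInt_unique (V := C_R_CompleteNormedModule)).
  by apply: is_RInt_f_eps_segment => //; lra.
have -> : Cminus (I a) L
          = Cplus (Cplus (Copp (Cmult (RtoC c) (Cdiv (cpowR a (Cminus s (RtoC 1)))
                                                      (Cminus s (RtoC 1)))))
                         (Copp (Cdiv (Cminus (Cmult s (floor_integral eps s a N)) (P N)) s)))
                  (Copp (Cdiv (Cminus (P N) AZ) s)).
  by rewrite I_eq /L; field.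
apply: Rle_trans (Cmod_triangle _ _) _; rewrite Cmod_opp Cmod_div //.
apply: Rplus_le_compat_r; rewrite /K Rmult_plus_distr_r.
apply: Rle_trans (Cmod_triangle _ _) _; rewrite !Cmod_opp Cmod_mult Cmod_R !Cmod_div //.
rewrite Cmod_cpowR (_ : Re (Cminus s (RtoC 1)) = Re s - 1); last by rewrite /Re /=; ring.
apply: Rplus_le_compat.
- have pow_le : Rpower a (Re s - 1) <= Rpower a (Re s - t).
    by apply: Rle_Rpower_base_le1; have := t_bounds; lra.
  rewrite /Rdiv (Rmult_comm (Rpower _ _)) -Rmult_assoc.
  apply: Rmult_le_compat_l pow_le.
  apply: Rmult_le_pos; first exact: Rabs_pos.
  by apply: Rlt_le; apply: Rinv_0_lt_compat; apply/Cmod_gt_0.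
- rewrite (Rle_div_l _ _ _ s_mod).
  have approx := floor_integral_approx eps s a t N (Rlt_le _ _ eps_gt0) (proj1 a_bounds) t_bounds.
  apply: Rle_trans approx _.
  by right; field; lra.
Qed.

Lemma RInt_f_eps_sub_le a : 0 < a < 1 -> Cmod (Cminus (I a) L) <= K * Rpower a (Re s - t).
Proof.
move=> a_bounds; apply: Rle_plus_epsilon => e e_gt0.
have se_gt1 : 1 < Re (Cplus s (RtoC eps)) by have := s_gt1; rewrite /Re /=; lra.
have es_gt0 : 0 < e * Cmod s by apply: Rmult_lt_0_compat.
have [N0 P_near] : eventually (fun N => Cmod (Cminus (P N) AZ) < e * Cmod s).
  have := partial_products_cvg _ _ se_gt1 s_gt1.
  by move/(filterlim_locally_ball_norm (U := C_NormedModule)) => /(_ (mkposreal _ es_gt0)).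
have [N1 a_ge] := exists_nR_ge (/ a).
apply: Rle_trans (RInt_f_eps_sub_le_partial a (maxn N0 N1) a_bounds _) _.
  by apply: Rle_trans a_ge _; apply: le_INR; apply/leP; rewrite ltnS leq_maxr.
apply: Rplus_le_compat_l; rewrite (Rle_div_l _ _ _ s_mod).
by have := P_near (maxn N0 N1) ltac:(apply/leP; exact: leq_maxl); lra.
Qed.

Lemma RInt_f_eps_cvg : filterlim I (at_right 0) (locally L).
Proof.
apply: (filterlim_of_norm_le (V := C_NormedModule) _ _ K (fun a => Rpower a (Re s - t))).
  exists (mkposreal _ Rlt_0_1) => a /ball_0_Rabs /= a_lt a_gt0.
  by apply: RInt_f_eps_sub_le; move: a_lt; rewrite Rabs_pos_eq; lra.
by apply: filterlim_Rpower_0; have := s_gt1; rewrite /t; lra.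
Qed.

Lemma is_RInt_gen_f_eps : is_RInt_gen F (at_right 0) (at_point 1) L.
Proof.
apply: (is_RInt_gen_at_right _ I); [lra | | exact: RInt_f_eps_cvg].
by move=> a a_bounds; apply: is_RInt_f_eps_RInt; lra.
Qed.

End NearZero.

Theorem mainTheorem4 (eps : R) (s : C) :
  0 < eps -> 1 < Re s ->
  is_RInt_gen (V := C_R_NormedModule)
    (fun u : R => Cmult (RtoC (f_eps eps u)) (cpowR u (Cminus s (RtoC 1))))
    (at_right 0) (at_point 1)
    (Cminus
       (Cmult (Cinv (zeta (RtoC (1 + eps)))) (Cinv (Cminus s (RtoC 1))))
       (Cmult (Cmult (Cinv (zeta (Cplus s (RtoC eps)))) (zeta s)) (Cinv s))).
Proof.
move=> eps_gt0 s_gt1.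
rewrite !Cinv_zeta ?mobius_dirichlet_RtoC; first exact: is_RInt_gen_f_eps.
- by rewrite /Re /= in s_gt1 *; lra.
- by rewrite /Re /=; lra.
Qed.
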